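(* Let $\lambda\in\hat U(N)$ be a signature and $q\in\mathbb{R}$. Then \[ m_{N,PP(q)}[\lambda]=\frac1N\sum_{i=1}^N\Big(\prod_{j\ne i}\frac{(\lambda_i-i)-(\lambda_j-j)-q}{(\lambda_i-i)-(\lambda_j-j)}\Big)\delta\Big(\frac{\lambda_i+N-i}{N}\Big) \] is a signed measure of total mass $1$, and for $q\in[-1,1]$ it is a probability measure.
   Context: A signature of length $N$ is a tuple $\lambda=(\lambda_1\ge\dots\ge\lambda_N)\in\mathbb{Z}^N$; $\hat U(N)$ is the set of such signatures. $\delta(x)$ denotes the Dirac measure at $x$. *)

From HB Require Import structures.
From mathcomp Require Import all_boot all_order all_algebra.
From mathcomp Require Import all_classical all_reals all_analysis.
Set Implicit Arguments. Unset Strict Implicit. Unset Printing Implicit Defensive.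
Import Order.TTheory GRing.Theory Num.Theory.
Import numFieldNormedType.Exports.
Local Open Scope classical_set_scope.
Local Open Scope ring_scope.

(* A signature of length N: lam : 'I_N -> int, non-increasing.
   Index i : 'I_N (0-based) corresponds to the paper's index i+1. *)
Definition is_signature (N : nat) (lam : 'I_N -> int) : Prop :=
  forall i j : 'I_N, (i <= j)%N -> lam j <= lam i.

Definition sig_shift (R : realType) (N : nat) (lam : 'I_N -> int) (i : 'I_N) : R :=
  (lam i)%:~R - (i.+1)%:R.

Definition pp_weight (R : realType) (N : nat) (lam : 'I_N -> int) (q : R)
    (i : 'I_N) : R :=
  \prod_(j < N | j != i)
     ((sig_shift R lam i - sig_shift R lam j - q) /
      (sig_shift R lam i - sig_shift R lam j)).

Definition pp_atom (R : realType) (N : nat) (lam : 'I_N -> int) (i : 'I_N) : R :=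
  ((lam i)%:~R + N%:R - (i.+1)%:R) / N%:R.

Definition mPP (R : realType) (N : nat) (lam : 'I_N -> int) (q : R)
    (A : set R) : \bar R :=
  (\sum_(i < N) ((N%:R^-1 * pp_weight lam q i)%:E * \d_(pp_atom R lam i) A))%E.

From HB Require Import structures.
From mathcomp Require Import all_boot all_order all_algebra.
From mathcomp Require Import all_classical all_reals all_analysis.
From mathcomp Require Import ring lra zify.
Import Order.TTheory GRing.Theory Num.Theory.
Import numFieldNormedType.Exports.
Local Open Scope classical_set_scope.
Local Open Scope ring_scope.

(* The weights w_i are the residues of the rational function
   P(z) = prod_j (z - x_j - q) / (z - x_j), i.e. P(z) = 1 - q sum_i w_i / (z - x_i).
   Comparing P(x_a) with the residue at x_a in the induction on the number of
   points shows that the weights sum to N, so the measure has mass 1.  For the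
   PP(q) measure the x_i = lam_i - i are distinct integers, so every factor of
   w_i is of the form (k - q) / k with k a nonzero integer, which is
   nonnegative as soon as |q| <= 1. *)

Section PartialFractions.
Variables (F : fieldType) (I : eqType) (x : I -> F) (q : F).
Hypothesis x_inj : injective x.

Definition pp_weight_seq (r : seq I) (i : I) : F :=
  \prod_(j <- r | j != i) ((x i - x j - q) / (x i - x j)).

Lemma pp_weight_seq_cons a r i : a \notin r -> i \in r ->
  pp_weight_seq (a :: r) i = (x i - x a - q) / (x i - x a) * pp_weight_seq r i.
Proof.
move=> ar ir; rewrite /pp_weight_seq big_cons.
by have -> : a != i by apply: contraNneq ar => ->.
Qed.

Lemma pp_weight_seq_head a r : a \notin r ->
  pp_weight_seq (a :: r) a = \prod_(j <- r) ((x a - x j - q) / (x a - x j)).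
Proof.
move=> ar; rewrite /pp_weight_seq big_cons eqxx /=.
rewrite big_seq_cond [RHS]big_seq_cond; apply: eq_bigl => j.
by case jr: (j \in r) => //=; apply: contraNneq ar => <-.
Qed.

Lemma prod_pp_ratio_partial_fraction r z : uniq r ->
  (forall j, j \in r -> z != x j) ->
  \prod_(j <- r) ((z - x j - q) / (z - x j)) =
  1 - q * \sum_(i <- r) pp_weight_seq r i / (z - x i).
Proof.
elim: r z => [|a r IH] z; first by rewrite !big_nil mulr0 subr0.
move=> /andP[ar ur] zr.
have zr' j : j \in r -> z != x j by move=> jr; apply: zr; rewrite inE jr orbT.
have xar j : j \in r -> x a != x j.
  by move=> jr; rewrite (inj_eq x_inj); apply: contraNneq ar => ->.
have za : z - x a != 0 by rewrite subr_eq0 zr ?mem_head.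
rewrite big_cons IH // big_cons pp_weight_seq_head // IH //.
under eq_big_seq => i ir do rewrite pp_weight_seq_cons //.
set S_z := \sum_(i <- r) _ / (z - x i).
set S_a := \sum_(i <- r) _ / (x a - x i).
set S := \sum_(i <- r) _.
suff termwise : - q * (z - x a - q) / (z - x a) * S_z
                - q ^+ 2 / (z - x a) * S_a + q * S = 0.
  by apply/eqP; rewrite -subr_eq0 -termwise; apply/eqP; field.
rewrite /S_z /S_a /S !mulr_sumr -!sumrN -!big_split /= big_seq big1 // => i ir.
have zi : z - x i != 0 by rewrite subr_eq0 zr'.
have ia : x i - x a != 0 by rewrite subr_eq0 eq_sym xar.
have split_za : z - x a = (z - x i) + (x i - x a) by ring.
have -> : x a - x i = - (x i - x a) by ring.
rewrite split_za; rewrite split_za in za.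
by field; rewrite oppr_eq0 za zi ia.
Qed.

Lemma sum_pp_weight_seq r : uniq r -> \sum_(i <- r) pp_weight_seq r i = (size r)%:R.
Proof.
elim: r => [|a r IH]; first by rewrite big_nil.
move=> /andP[ar ur].
have xar j : j \in r -> x a != x j.
  by move=> jr; rewrite (inj_eq x_inj); apply: contraNneq ar => ->.
rewrite big_cons pp_weight_seq_head // prod_pp_ratio_partial_fraction //.
under eq_big_seq => i ir do rewrite pp_weight_seq_cons //.
have shift : \sum_(i <- r) (x i - x a - q) / (x i - x a) * pp_weight_seq r i =
    \sum_(i <- r) pp_weight_seq r i + q * \sum_(i <- r) pp_weight_seq r i / (x a - x i).
  rewrite mulr_sumr -big_split /=; apply: eq_big_seq => i ir.
  have ia : x i - x a != 0 by rewrite subr_eq0 eq_sym xar.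
  have -> : x a - x i = - (x i - x a) by ring.
  by field; rewrite oppr_eq0 ia.
by rewrite shift IH //= -addn1 natrD; ring.
Qed.

End PartialFractions.

Lemma int_ratio_sub_ge0 (R : realFieldType) (k : int) (q : R) :
  k != 0 -> -1 <= q <= 1 -> 0 <= (k%:~R - q) / k%:~R.
Proof.
move=> k0 /andP[q1 q2]; case: (ltgtP k 0) k0 => // k_sgn _.
- have k1 : (k%:~R : R) <= -1.
    have : k <= -1 by lia.
    by rewrite -(ler_int R) mulrNz.
  by apply: mulr_le0; [lra | rewrite invr_le0; lra].
- have k1 : 1 <= (k%:~R : R).
    have : 1 <= k by lia.
    by rewrite -(ler_int R).
  by apply: divr_ge0; lra.
Qed.

Lemma dirac_combination_charge {R : realType} {d : measure_display}
    {T : measurableType d} {J : Type} (r : seq J) (c : J -> R) (a : J -> T) :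
  exists mu : {charge set T -> \bar R},
    forall A, mu A = (\sum_(i <- r) ((c i)%:E * \d_(a i) A))%E.
Proof.
elim: r => [|i r [mu muE]]; first by exists czero => A; rewrite big_nil.
exists (cadd (cscale (c i) (charge_of_finite_measure (@dirac _ T (a i) R))) mu).
by move=> A; rewrite big_cons -muE.
Qed.

Section ProbabilityOfCharge.
Variables (d : measure_display) (T : measurableType d) (R : realType).
Variable nu : {charge set T -> \bar R}.
Hypotheses (nu_ge0 : forall A, (0 <= nu A)%E) (nuT : nu setT = 1%E).

(* [nuT] must be a parameter of the definition: the probability instance
   below is keyed on it. *)
#[using="nuT"]
Definition probability_of_charge : set T -> \bar R := measure_of_charge nu nu_ge0.
HB.instance Definition _ := Measure.on probability_of_charge.
HB.instance Definition _ :=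
  Measure_isProbability.Build _ _ _ probability_of_charge nuT.

End ProbabilityOfCharge.
Arguments probability_of_charge {d T R nu}.

Section Signature.
Variables (R : realType) (N : nat) (lam : 'I_N -> int).
Hypothesis lam_sig : is_signature lam.

Lemma sig_shift_int (i : 'I_N) : sig_shift R lam i = (lam i - (i.+1)%:Z)%:~R.
Proof. by rewrite /sig_shift intrB. Qed.

Lemma sig_shift_diff_neq0 (i j : 'I_N) : i != j -> lam i - (i.+1)%:Z != lam j - (j.+1)%:Z.
Proof.
rewrite -val_eqE /=; case: (ltngtP i j) => // ij _.
- by have := lam_sig i j (ltnW ij); lia.
- by have := lam_sig j i (ltnW ij); lia.
Qed.

Lemma sig_shift_inj : injective (sig_shift R lam).
Proof.
move=> i j; rewrite !sig_shift_int => /intr_inj eq_ij.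
by case: (eqVneq i j) => // /sig_shift_diff_neq0; rewrite eq_ij eqxx.
Qed.

Lemma sum_pp_weight (q : R) : \sum_(i < N) pp_weight lam q i = N%:R.
Proof.
rewrite (@sum_pp_weight_seq _ _ _ q sig_shift_inj _ (index_enum_uniq _)).
by rewrite /index_enum unlock -enumT -cardT card_ord.
Qed.

Lemma pp_weight_ge0 (q : R) (i : 'I_N) : -1 <= q <= 1 -> 0 <= pp_weight lam q i.
Proof.
move=> q1; apply: prodr_ge0 => j ji.
rewrite !sig_shift_int -intrB; apply: int_ratio_sub_ge0 => //.
by rewrite subr_eq0 sig_shift_diff_neq0 // eq_sym.
Qed.

End Signature.

Theorem mainTheorem3 (R : realType) (N : nat) (lam : 'I_N -> int) (q : R) :
  (0 < N)%N -> is_signature lam ->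
  (exists mu : {charge set R -> \bar R},
      forall A : set R, measurable A -> mu A = mPP lam q A)
  /\ mPP lam q setT = 1%E
  /\ (-1 <= q <= 1 ->
      exists P : probability R R,
        forall A : set R, measurable A -> P A = mPP lam q A).
Proof.
move=> N_gt0 lam_sig.
have [mu muE] := dirac_combination_charge (index_enum 'I_N)
  (fun i => N%:R^-1 * pp_weight lam q i) (pp_atom R lam).
have muT : mu setT = 1%E.
  rewrite muE; under eq_bigr do rewrite diracT mule1.
  by rewrite sumEFin -mulr_sumr sum_pp_weight // mulVf // pnatr_eq0 -lt0n.
split; first by exists mu => A _; rewrite muE.
split; first by rewrite -muT muE.
move=> q1.
have mu_ge0 A : (0 <= mu A)%E.
  rewrite muE; apply: sume_ge0 => i _; apply: mule_ge0 => //.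
  by rewrite lee_fin mulr_ge0 ?invr_ge0 ?ler0n ?pp_weight_ge0.
exists (probability_of_charge mu_ge0 muT) => A _.
by have -> : mPP lam q A = mu A by rewrite muE.
Qed.
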